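(* Let $p>q>1$ be relatively prime integers. If a sequence is $\frac{p}{q}$-automatic, then it is the image under a coding of a fixed point of a $q$-block substitution all of whose images have length $p$.
   Context: Let $A_p=\{0,1,\ldots,p-1\}$. For a word $w=w_\ell\cdots w_0\in A_p^*$, $\mathrm{val}_{\frac pq}(w)=\sum_{i=0}^{\ell}\frac{w_i}{q}\left(\frac pq\right)^i$. Every integer $n\ge 0$ has a unique representation $\mathrm{rep}_{\frac pq}(n)\in A_p^*$ not starting with $0$ such that $\mathrm{val}_{\frac pq}(\mathrm{rep}_{\frac pq}(n))=n$, with $\mathrm{rep}_{\frac pq}(0)=\varepsilon$. A sequence $\mathbf{x}$ over a finite alphabet $B$ is $\frac pq$-automatic if there is a deterministic finite automaton with output $(Q,q_0,A_p,\delta,\tau:Q\to B)$ with $x_n=\tau(\delta(q_0,\mathrm{rep}_{\frac pq}(n)))$ for all $n\ge0$. A coding is a letter-to-letter map. A $q$-block substitution is a map $g:C^q\to C^*$ acting on words by $g(w_0\cdots w_{q-1})g(w_q\cdots w_{2q-1})\cdots$; an infinite word $\mathbf{w}=w_0w_1\cdots$ is a fixed point of $g$ if $\mathbf{w}=g(w_0\cdots w_{q-1})g(w_q\cdots w_{2q-1})\cdots$. ''All images have length $p$'' means $|g(u)|=p$ for every $u\in C^q$. *)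

From mathcomp Require Import all_boot all_order all_algebra.
Set Implicit Arguments. Unset Strict Implicit. Unset Printing Implicit Defensive.
Import Order.TTheory GRing.Theory Num.Theory.

(* A word w = w_l ... w_0 over A_p = 'I_p is a seq written left to right,
   so w_0 (least significant digit) is the LAST element. *)
Definition digit_at (p : nat) (w : seq 'I_p) (i : nat) : nat :=
  nth 0%N (rev (map (@nat_of_ord p) w)) i.

Definition valpq (p q : nat) (w : seq 'I_p) : rat :=
  (\sum_(i < size w) ((digit_at w i)%:R / q%:R) * (p%:R / q%:R) ^+ i)%R.

Definition no_lead0 (p : nat) (w : seq 'I_p) : bool :=
  if w is a :: _ then nat_of_ord a != 0%N else true.

(* rep_{p/q}(n) is the unique w with no_lead0 w and valpq w = n. *)
Definition is_rep (p q : nat) (n : nat) (w : seq 'I_p) : Prop :=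
  no_lead0 w /\ valpq q w = n%:R%R.

Definition dfa_run (Q : Type) (p : nat) (delta : Q -> 'I_p -> Q) (q0 : Q)
  (w : seq 'I_p) : Q := foldl delta q0 w.

Definition pq_automatic (p q : nat) (B : finType) (x : nat -> B) : Prop :=
  exists (Q : finType) (q0 : Q) (delta : Q -> 'I_p -> Q) (tau : Q -> B),
    forall (n : nat) (w : seq 'I_p), is_rep q n w -> x n = tau (dfa_run delta q0 w).

Definition block (C : Type) (q : nat) (w : nat -> C) (k : nat) : q.-tuple C :=
  [tuple w (k * q + j)%N | j < q].

(* w is a fixed point of the q-block substitution g:
   w = g(block 0) g(block 1) ... ; i.e. every finite prefix of the
   concatenation agrees with w. *)
Definition block_fixed_point (C : Type) (q : nat) (g : q.-tuple C -> seq C)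
  (w : nat -> C) : Prop :=
  forall k i : nat,
    (i < size (flatten [seq g (block q w j) | j <- iota 0 k]))%N ->
    nth (w i) (flatten [seq g (block q w j) | j <- iota 0 k]) i = w i.

From mathcomp Require Import all_boot all_order all_algebra.
From mathcomp Require Import zify ring.
Set Implicit Arguments. Unset Strict Implicit. Unset Printing Implicit Defensive.
Import GRing.Theory Num.Theory.

(* Since val(u a) = (p/q) val(u) + a/q, the representation of n > 0 is
   rep(n) = rep(qn div p) . (qn mod p), so the automaton state s(n) reached on
   rep(n) is delta(s(qn div p), qn mod p). *)

Lemma valpq_rcons p q (u : seq 'I_p) (a : 'I_p) :
  valpq q (rcons u a) = ((p%:R / q%:R) * valpq q u + (a : nat)%:R / q%:R)%R.
Proof.
rewrite /valpq size_rcons big_ord_recl {1}/digit_at map_rcons rev_rcons /=.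
rewrite expr0 mulr1 addrC mulr_sumr; congr (_ + _)%R.
apply: eq_bigr => i _; rewrite /digit_at map_rcons rev_rcons /= exprS; ring.
Qed.

Lemma nth_block (C : Type) q (w : nat -> C) k i (x0 : C) :
  i < q -> nth x0 (block q w k) i = w (k * q + i).
Proof. by move=> lt_iq; rewrite (nth_mktuple _ x0 (Ordinal lt_iq)). Qed.

Section BlockImages.
Variables (C : Type) (p q : nat) (g : q.-tuple C -> seq C) (w : nat -> C).
Hypothesis g_block : forall k, g (block q w k) = [seq w i | i <- iota (k * p) p].

Lemma flatten_block_images k :
  flatten [seq g (block q w j) | j <- iota 0 k] = [seq w i | i <- iota 0 (k * p)].
Proof.
elim: k => [|k IHk] //.
rewrite -addn1 iotaD map_cat flatten_cat IHk /= cats0 g_block.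
by rewrite add0n mulnDl mul1n iotaD map_cat.
Qed.

Lemma block_fixed_point_of_images : block_fixed_point g w.
Proof.
move=> k i; rewrite flatten_block_images size_map size_iota => lt_i.
by rewrite (nth_map 0) ?size_iota // nth_iota.
Qed.

End BlockImages.

Section Representation.
Variables (p' q : nat).
Local Notation p := p'.+1.
Hypotheses (q_gt0 : 0 < q) (lt_qp : q < p).

Definition pq_parent n := q * n %/ p.
Definition pq_digit n : 'I_p := inord (q * n %% p).

Lemma pq_digitE n : pq_digit n = q * n %% p :> nat.
Proof. by rewrite inordK // ltn_pmod. Qed.

Lemma pq_parent_lt n : 0 < n -> pq_parent n < n.
Proof. by move=> n_gt0; rewrite ltn_divLR // mulnC ltn_pmul2l. Qed.

Lemma pq_parent_lt_q j : j < p -> pq_parent j < q.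
Proof. by move=> lt_jp; rewrite ltn_divLR // ltn_mul2l q_gt0. Qed.

Lemma pq_parent_shift k j : pq_parent (k * p + j) = k * q + pq_parent j.
Proof. by rewrite /pq_parent mulnDr mulnA (mulnC q) divnMDl. Qed.

Lemma pq_digit_shift k j : pq_digit (k * p + j) = pq_digit j.
Proof. by rewrite /pq_digit mulnDr mulnA (mulnC q) modnMDl. Qed.

(* Fuel n suffices for n, since parents strictly decrease. *)
Fixpoint pq_rep_fuel (fuel n : nat) : seq 'I_p :=
  if fuel is f.+1 then
    if n == 0 then [::] else rcons (pq_rep_fuel f (pq_parent n)) (pq_digit n)
  else [::].

Definition pq_rep n := pq_rep_fuel n n.

Lemma pq_rep_fuel_enough f1 f2 n :
  n <= f1 -> n <= f2 -> pq_rep_fuel f1 n = pq_rep_fuel f2 n.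
Proof.
elim: f1 f2 n => [|f1 IHf] [|f2] [|n] //= le_nf1 le_nf2.
have lt_parent := pq_parent_lt (ltn0Sn n).
by rewrite (IHf f2) //; lia.
Qed.

Lemma pq_rep_rec n :
  0 < n -> pq_rep n = rcons (pq_rep (pq_parent n)) (pq_digit n).
Proof.
case: n => [|n] // _; have lt_parent := pq_parent_lt (ltn0Sn n).
by rewrite {1}/pq_rep /= (@pq_rep_fuel_enough _ (pq_parent n.+1)) //; lia.
Qed.

Lemma pq_rep_nil n : (pq_rep n == [::]) = (n == 0).
Proof.
case: (posnP n) => [-> //|n_gt0].
by rewrite pq_rep_rec // -size_eq0 size_rcons gtn_eqF.
Qed.

Lemma no_lead0_pq_rep n : no_lead0 (pq_rep n).
Proof.
elim/ltn_ind: n => n IHn; case: (posnP n) => [-> //|n_gt0].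
have := IHn _ (pq_parent_lt n_gt0); rewrite [pq_rep n]pq_rep_rec //.
case E: (pq_rep (pq_parent n)) => [|a u] //= _.
have parent0 : pq_parent n = 0 by apply/eqP; rewrite -pq_rep_nil E.
have := divn_eq (q * n) p; rewrite -/(pq_parent n) parent0 add0n pq_digitE => <-.
by rewrite muln_eq0 negb_or -!lt0n q_gt0.
Qed.

Lemma valpq_pq_rep n : valpq q (pq_rep n) = n%:R%R.
Proof.
elim/ltn_ind: n => n IHn; case: (posnP n) => [->|n_gt0].
  by rewrite /valpq big_ord0.
have q_neq0 : (q%:R : rat)%R != 0%R by rewrite pnatr_eq0 -lt0n.
rewrite pq_rep_rec // valpq_rcons IHn ?pq_parent_lt // pq_digitE.
apply: (mulfI q_neq0).
by rewrite -natrM [in RHS](divn_eq (q * n) p) natrD natrM; field.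
Qed.

Lemma is_rep_pq_rep n : is_rep q n (pq_rep n).
Proof. by split; [apply: no_lead0_pq_rep | apply: valpq_pq_rep]. Qed.

Section Substitution.
Variables (Q : Type) (q0 : Q) (delta : Q -> 'I_p -> Q) (s : nat -> Q).
Hypothesis s_rec :
  forall n, 0 < n -> s n = delta (s (pq_parent n)) (pq_digit n).

(* The flag marks position 0, the only position that is its own parent: its
   image must be copied rather than computed by one transition of delta. *)
Definition flagged n := (s n, n == 0).

Definition pq_child (u : q.-tuple (Q * bool)) j : Q * bool :=
  let c := nth (q0, false) u (pq_parent j) in
  if (j == 0) && c.2 then c else (delta c.1 (pq_digit j), false).

Definition pq_subst (u : q.-tuple (Q * bool)) : seq (Q * bool) :=
  [seq pq_child u j | j <- iota 0 p].

Lemma size_pq_subst u : size (pq_subst u) = p.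
Proof. by rewrite size_map size_iota. Qed.

Lemma pq_child_block k j :
  j < p -> pq_child (block q flagged k) j = flagged (k * p + j).
Proof.
move=> lt_jp; rewrite /pq_child nth_block ?pq_parent_lt_q //.
case: (posnP (k * p + j)) => [kpj0 | kpj_gt0].
  have [-> ->] : k = 0 /\ j = 0 by lia.
  by rewrite /pq_parent muln0 div0n.
rewrite -pq_parent_shift /flagged /= [in RHS]s_rec // (gtn_eqF kpj_gt0).
have -> : (j == 0) && (pq_parent (k * p + j) == 0) = false.
  case: (posnP j) => [j0 | //].
  move: kpj_gt0; rewrite j0 pq_parent_shift /pq_parent muln0 div0n !addn0.
  by rewrite muln_gt0 muln_eq0 (gtn_eqF q_gt0) orbF => /andP [/gtn_eqF].
by rewrite pq_digit_shift.
Qed.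

Lemma pq_subst_block k :
  pq_subst (block q flagged k) = [seq flagged i | i <- iota (k * p) p].
Proof.
rewrite /pq_subst -[k * p]addn0 iotaDl -map_comp; apply/eq_in_map => j.
by rewrite mem_iota => /andP [_ lt_jp]; rewrite pq_child_block.
Qed.

End Substitution.
End Representation.

Theorem mainTheorem6 (p q : nat) (hq : (1 < q)%N) (hpq : (q < p)%N)
  (hcop : coprime p q) (B : finType) (x : nat -> B) :
  pq_automatic p q x ->
  exists (C : finType) (g : q.-tuple C -> seq C) (w : nat -> C) (f : C -> B),
    (forall u : q.-tuple C, size (g u) = p) /\
    block_fixed_point g w /\
    (forall n : nat, x n = f (w n)).
Proof.
case: p hpq hcop => [|p'] // lt_qp _ [Q [q0 [delta [tau x_run]]]].
have q_gt0 : 0 < q by apply: ltnW.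
pose s n := dfa_run delta q0 (pq_rep p' q n).
have s_rec n : 0 < n -> s n = delta (s (pq_parent p' q n)) (pq_digit p' q n).
  by move=> n_gt0; rewrite /s pq_rep_rec // /dfa_run foldl_rcons.
exists (Q * bool)%type, (pq_subst q0 delta), (flagged s), (fun c => tau c.1).
split; first exact: size_pq_subst.
split; first exact/block_fixed_point_of_images/pq_subst_block.
by move=> n; apply/x_run/is_rep_pq_rep.
Qed.
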